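(* In the setting described in the context, for every $\delta\le\delta_0$ and every $k\ge0$, the tubular neighborhood $$T_k(\delta)=\gamma_k\big(B(\gamma_k^{-1}L_k,\delta)\big)$$ of $L_k$ is disjoint from $L_{k+1}$.
   Context: $\mathbb{R}^{2,1}$ is $\mathbb{R}^3$ with $\mathbb{B}(u,v)=u_1v_1+u_2v_2-u_3v_3$; $\mathbb{E}$ is the affine space modelled on it; $\operatorname{Isom}^0(\mathbb{E})$ consists of maps $x\mapsto gx+b$ with $g\in\mathrm{SO}^0(2,1)$. $\rho$ is Euclidean distance and $B(S,\delta)$ the open Euclidean $\delta$-neighborhood. Crooked planes: with $v_0=(1,0,0)$, $S_0=\{(0,u_2,u_3):|u_3|\ge|u_2|\}$, $W_0^\mp=\{\pm u_1\le 0$ ... $\}$ precisely $W_0^-=\{u_1\le0,u_2=u_3\}$, $W_0^+=\{u_1\ge0,u_2=-u_3\}$, $\mathcal{C}_0=W_0^-\cup S_0\cup W_0^+$; for unit-spacelike $u$ and $g\in\mathrm{SO}^0(2,1)$ with $gv_0=u$, $\mathcal{C}(u,p)=p+g(\mathcal{C}_0)$ has vertex $p$ and stem $p+g(S_0)$; the crooked half-space $\mathcal{H}(u,p)$ is the component of $\mathbb{E}-\mathcal{C}(u,p)$ containing $p+\{w:\mathbb{B}(w,w)<0,w_3>0,\mathbb{B}(w,u)>0\}$, and its angle is the length of the arc $\{w\in S^1:\mathbb{B}(w,u)>0\}$ of $S^1=\{(\cos\phi,\sin\phi,1)\}$. Setting: $h_1,\dots,h_m\in\operatorname{Isom}^0(\mathbb{E})$,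 pairwise disjoint crooked half-spaces $\mathcal{H}_i^j$ ($(i,j)\in\{1,\dots,m\}\times\{+1,-1\}$) with $h_i(\mathcal{H}_i^-)=\mathbb{E}-\overline{\mathcal{H}_i^+}$, $\Gamma=\langle h_1,\dots,h_m\rangle$, $h_i^j:=h_i^{\,j}$, $X=\mathbb{E}-\bigcup\overline{\mathcal{H}_i^j}$. $\delta_0>0$ is such that $B(\mathbb{E}-\mathcal{H}_i^j,\delta_0)\subset\mathbb{E}-h_i^j\overline{\mathcal{H}_{i'}^{j'}}$ whenever $(i,j)\ne(i',-j')$. A point $p\in\mathbb{E}-\Gamma\overline{X}$ is given, together with a sequence $(i_k,j_k)_{k\ge0}$ with $(i_k,j_k)\ne(i_{k+1},-j_{k+1})$, elements $\gamma_k=h_{i_0}^{j_0}\cdots h_{i_{k-1}}^{j_{k-1}}$, and crooked half-spaces $\mathfrak{H}_k=\gamma_k\mathcal{H}_{i_k}^{j_k}$ with $\mathfrak{H}_k\supsetneq\mathfrak{H}_{k+1}$, $p\in\mathfrak{H}_k$, and the angle of $\mathfrak{H}_0$ less than $\pi/2$. $P$ is an affine plane through $p$ whose direction is a definite plane (on which $\mathbb{B}$ is positive definite) and which contains the vertex of no crooked plane $\gamma\partial\mathcal{H}_i^j$; then each $\partial\mathfrak{H}_k\cap P$ is a zigzag (two rays joined by a segment, the intersection of $P$ with the stem), whose vertices are the endpoints of this segment. $\nu$ is a line in $P$ parallel to the segment $P\cap(\text{stem of }\partial\mathfrak{H}_0)$. For each $k$, $L_k\subset P$ is the line perpendicular (in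 the Euclidean sense) to $\nu$ which bounds a half-plane $\Pi_k\subset P$ containing $\mathfrak{H}_k\cap P$ and passes through a vertex of the zigzag $\partial\mathfrak{H}_k\cap P$. *)

From HB Require Import structures.
From mathcomp Require Import all_boot all_order all_algebra.
From mathcomp Require Import all_classical all_reals all_analysis.
Set Implicit Arguments. Unset Strict Implicit. Unset Printing Implicit Defensive.
Import Order.TTheory GRing.Theory Num.Theory.
Import numFieldNormedType.Exports.
Local Open Scope classical_set_scope.
Local Open Scope ring_scope.

Section Minkowski.
Variable R : realType.

Notation vec := 'cV[R]_3.

Definition c1 (x : vec) : R := x (inord 0) 0.
Definition c2 (x : vec) : R := x (inord 1) 0.
Definition c3 (x : vec) : R := x (inord 2) 0.

Definition mkv (a b c : R) : vec := \col_(i < 3) nth 0 [:: a; b; c] i.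

Definition Bform (u v : vec) : R := c1 u * c1 v + c2 u * c2 v - c3 u * c3 v.

(* SO^0(2,1): preserves B, det 1, time-orientation preserving (g_33 > 0) *)
Definition SO0 (g : 'M[R]_3) : Prop :=
  (forall u v, Bform (g *m u) (g *m v) = Bform u v) /\ \det g = 1 /\
  0 < g (inord 2) (inord 2).

(* an element of Isom^0(E) is a pair (g,b), acting by x |-> g x + b *)
Definition act (h : 'M[R]_3 * vec) (x : vec) : vec := h.1 *m x + h.2.
Definition actinv (h : 'M[R]_3 * vec) (x : vec) : vec := invmx h.1 *m (x - h.2).
(* h^j with j : bool, true = +1, false = -1 *)
Definition hpow (h : 'M[R]_3 * vec) (j : bool) : vec -> vec :=
  if j then act h else actinv h.

Definition rho (x y : vec) : R := Num.sqrt (\sum_(i < 3) (x i 0 - y i 0) ^+ 2).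
Definition nbhd (S : set vec) (d : R) : set vec :=
  [set x | exists2 s, S s & rho x s < d].
Definition dot (x y : vec) : R := \sum_(i < 3) x i 0 * y i 0.

Definition v0 : vec := mkv 1 0 0.
Definition S0 : set vec := [set x | c1 x = 0 /\ `|c2 x| <= `|c3 x|].
Definition W0m : set vec := [set x | c1 x <= 0 /\ c2 x = c3 x].
Definition W0p : set vec := [set x | 0 <= c1 x /\ c2 x = - c3 x].
Definition C0 : set vec := W0m `|` S0 `|` W0p.

Definition crooked_plane (u p : vec) : set vec :=
  [set x | exists g y, [/\ SO0 g, g *m v0 = u, C0 y & x = p + g *m y]].
Definition stem (u p : vec) : set vec :=
  [set x | exists g y, [/\ SO0 g, g *m v0 = u, S0 y & x = p + g *m y]].
Definition crooked_halfspace (u p : vec) : set vec :=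
  [set x | exists w, [/\ Bform w w < 0, 0 < c3 w, 0 < Bform w u &
            connected_component (~` crooked_plane u p) (p + w) x]].

Definition angle (u : vec) : \bar R :=
  lebesgue_measure [set t : R | (0 <= t < pi *+ 2) /\
                               0 < Bform (mkv (cos t) (sin t) 1) u].

Inductive in_Gamma (m : nat) (h : 'I_m -> 'M[R]_3 * vec) : (vec -> vec) -> Prop :=
| Gamma_id : in_Gamma h id
| Gamma_step f i j : in_Gamma h f -> in_Gamma h (f \o hpow (h i) j).

Fixpoint gam (m : nat) (h : 'I_m -> 'M[R]_3 * vec) (s : nat -> 'I_m * bool)
  (k : nat) : vec -> vec :=
  match k with
  | 0 => id
  | k'.+1 => gam h s k' \o hpow (h (s k').1) (s k').2
  end.

Definition plane (p a b : vec) : set vec :=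
  [set x | exists s t : R, x = p + s *: a + t *: b].
Definition definite_dir (a b : vec) : Prop :=
  forall s t : R, (s, t) != (0, 0) ->
    0 < Bform (s *: a + t *: b) (s *: a + t *: b).

Definition segment (v w : vec) : set vec :=
  [set x | exists t : R, 0 <= t <= 1 /\ x = (1 - t) *: v + t *: w].
Definition line (n0 d : vec) : set vec := [set x | exists t : R, x = n0 + t *: d].

End Minkowski.

(* Write F_k = gamma_k H_k.  The line L_(k+1) passes through a vertex v' of the
   zigzag of F_(k+1) = gamma_k h (H_(k+1)), so v' = gamma_k w with w in
   h(closure H_(k+1)), because the stem of a crooked plane lies in the closure of
   its half-space.  If gamma_k z in L_(k+1) were within delta of a point of L_k in
   gamma_k-coordinates, say gamma_k y, then translating y by w - z gives a point y'
   with gamma_k y' in L_k (the lines L_k are all perpendicular to nu inside P) and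
   rho(w, y') < delta <= delta0.  No point of L_k lies in F_k: F_k is open along
   every ray (the crooked plane is closed), so such a point could be pushed inside
   F_k and inside P across L_k, out of the half-plane Pi_k.  Hence w is within
   delta0 of E - H_k, against the choice of delta0. *)

From HB Require Import structures.
From mathcomp Require Import all_boot all_order all_algebra.
From mathcomp Require Import all_classical all_reals all_analysis.
From mathcomp Require Import ring lra.
Import Order.TTheory GRing.Theory Num.Theory.
Import numFieldNormedType.Exports.
Local Open Scope classical_set_scope.
Local Open Scope ring_scope.
Set Implicit Arguments. Unset Strict Implicit. Unset Printing Implicit Defensive.

Section CrookedHalfspaces.
Variable R : realType.
Notation vec := 'cV[R]_3.

Lemma sum3 (F : 'I_3 -> R) : \sum_(j < 3) F j = F (inord 0) + F (inord 1) + F (inord 2).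
Proof.
rewrite !big_ord_recl big_ord0 addr0 addrA.
by congr (F _ + F _ + F _); apply: val_inj; rewrite /= inordK.
Qed.

Lemma cV3_eq (x y : vec) : c1 x = c1 y -> c2 x = c2 y -> c3 x = c3 y -> x = y.
Proof.
move=> e1 e2 e3; apply/matrixP => i j; rewrite (ord1 j).
case: i => [[|[|[|n]]] Hi] //.
- by have -> : Ordinal Hi = inord 0 by apply: val_inj; rewrite /= inordK.
- by have -> : Ordinal Hi = inord 1 by apply: val_inj; rewrite /= inordK.
- by have -> : Ordinal Hi = inord 2 by apply: val_inj; rewrite /= inordK.
Qed.

Lemma c1_mkv (a b c : R) : c1 (mkv a b c) = a. Proof. by rewrite /c1 mxE inordK. Qed.
Lemma c2_mkv (a b c : R) : c2 (mkv a b c) = b. Proof. by rewrite /c2 mxE inordK. Qed.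
Lemma c3_mkv (a b c : R) : c3 (mkv a b c) = c. Proof. by rewrite /c3 mxE inordK. Qed.
Definition mkvE := (c1_mkv, c2_mkv, c3_mkv).

Lemma c1D (x y : vec) : c1 (x + y) = c1 x + c1 y. Proof. by rewrite /c1 mxE. Qed.
Lemma c2D (x y : vec) : c2 (x + y) = c2 x + c2 y. Proof. by rewrite /c2 mxE. Qed.
Lemma c3D (x y : vec) : c3 (x + y) = c3 x + c3 y. Proof. by rewrite /c3 mxE. Qed.
Lemma c1N (x : vec) : c1 (- x) = - c1 x. Proof. by rewrite /c1 mxE. Qed.
Lemma c2N (x : vec) : c2 (- x) = - c2 x. Proof. by rewrite /c2 mxE. Qed.
Lemma c3N (x : vec) : c3 (- x) = - c3 x. Proof. by rewrite /c3 mxE. Qed.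
Lemma c1Z (a : R) (x : vec) : c1 (a *: x) = a * c1 x. Proof. by rewrite /c1 mxE. Qed.
Lemma c2Z (a : R) (x : vec) : c2 (a *: x) = a * c2 x. Proof. by rewrite /c2 mxE. Qed.
Lemma c3Z (a : R) (x : vec) : c3 (a *: x) = a * c3 x. Proof. by rewrite /c3 mxE. Qed.
Definition coordE := (c1D, c2D, c3D, c1N, c2N, c3N, c1Z, c2Z, c3Z).

Definition ent (g : 'M[R]_3) (i j : nat) : R := g (inord i) (inord j).

Lemma entE (g : 'M[R]_3) (i j : 'I_3) : g i j = ent g i j.
Proof. by rewrite /ent !inord_val. Qed.

Lemma c1_mul (g : 'M[R]_3) (x : vec) :
  c1 (g *m x) = ent g 0 0 * c1 x + ent g 0 1 * c2 x + ent g 0 2 * c3 x.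
Proof. by rewrite /c1 mxE sum3. Qed.
Lemma c2_mul (g : 'M[R]_3) (x : vec) :
  c2 (g *m x) = ent g 1 0 * c1 x + ent g 1 1 * c2 x + ent g 1 2 * c3 x.
Proof. by rewrite /c2 mxE sum3. Qed.
Lemma c3_mul (g : 'M[R]_3) (x : vec) :
  c3 (g *m x) = ent g 2 0 * c1 x + ent g 2 1 * c2 x + ent g 2 2 * c3 x.
Proof. by rewrite /c3 mxE sum3. Qed.
Definition coord_mulE := (c1_mul, c2_mul, c3_mul).

Lemma det3 (g : 'M[R]_3) : \det g =
  ent g 0 0 * (ent g 1 1 * ent g 2 2 - ent g 1 2 * ent g 2 1)
  - ent g 1 0 * (ent g 0 1 * ent g 2 2 - ent g 0 2 * ent g 2 1)
  + ent g 2 0 * (ent g 0 1 * ent g 1 2 - ent g 0 2 * ent g 1 1).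
Proof.
rewrite !(expand_det_col _ ord0) !big_ord_recl !big_ord0 /cofactor.
rewrite !(expand_det_col _ ord0) !big_ord_recl !big_ord0 /cofactor.
by rewrite !det_mx11 !mxE !(entE g) /=; ring.
Qed.

Lemma Bform_v0l (z : vec) : Bform (v0 R) z = c1 z.
Proof. by rewrite /Bform /v0 !mkvE; ring. Qed.

Lemma stabilizer_v0_boost (k : 'M[R]_3) :
  k *m v0 R = v0 R -> (forall x y, Bform (k *m x) (k *m y) = Bform x y) -> \det k = 1 ->
  exists a b : R, a ^+ 2 - b ^+ 2 = 1 /\
    forall y, k *m y = mkv (c1 y) (a * c2 y + b * c3 y) (b * c2 y + a * c3 y).
Proof.
move=> kv kB kd.
pose e1 : vec := mkv 0 1 0; pose e2 : vec := mkv 0 0 1.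
have h00 : ent k 0 0 = 1 by have := congr1 (@c1 R) kv; rewrite c1_mul /v0 !mkvE; lra.
have h10 : ent k 1 0 = 0 by have := congr1 (@c2 R) kv; rewrite c2_mul /v0 !mkvE; lra.
have h20 : ent k 2 0 = 0 by have := congr1 (@c3 R) kv; rewrite c3_mul /v0 !mkvE; lra.
have h01 : ent k 0 1 = 0 by have := kB (v0 R) e1; rewrite kv !Bform_v0l c1_mul !mkvE; lra.
have h02 : ent k 0 2 = 0 by have := kB (v0 R) e2; rewrite kv !Bform_v0l c1_mul !mkvE; lra.
have := kB e1 e1; have := kB e2 e2; have := kB e1 e2; move: kd.
rewrite /Bform !coord_mulE !mkvE det3 h00 h10 h20 h01 h02.
set a := ent k 1 1; set b := ent k 1 2; set c := ent k 2 1; set d := ent k 2 2.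
move=> Edet0 E12 E22 E11.
have Edet : a * d - b * c = 1 by lra.
have Ea : a ^+ 2 - c ^+ 2 = 1 by rewrite !expr2; lra.
have Eb : b ^+ 2 - d ^+ 2 = -1 by rewrite !expr2; lra.
have Eab : a * b - c * d = 0 by lra.
have hda : d = a.
  have : d - a = a * (a * d - b * c - 1) - d * (a ^+ 2 - c ^+ 2 - 1) + c * (a * b - c * d).
    by ring.
  by rewrite Edet Ea Eab !subrr !mulr0 subr0 addr0 => /eqP; rewrite subr_eq0 => /eqP.
have hcb : c = b.
  have : c - b = b * (a * d - b * c - 1) + c * (b ^+ 2 - d ^+ 2 + 1) - d * (a * b - c * d).
    by ring.
  by rewrite Edet Eb Eab subrr addNr !mulr0 addr0 subr0 => /eqP; rewrite subr_eq0 => /eqP.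
exists a, b; split; first by rewrite -hcb.
move=> y; apply: cV3_eq; rewrite coord_mulE !mkvE ?h00 ?h01 ?h02 ?h10 ?h20 -/a -/b -/c -/d ?hda ?hcb; ring.
Qed.

Lemma ler_norm_sqr (x y : R) : (`|x| <= `|y|) = (x ^+ 2 <= y ^+ 2).
Proof. by rewrite -(real_normK (num_real x)) -(real_normK (num_real y)) ler_sqr // nnegrE. Qed.

Lemma boost_C0 (a b : R) (y : vec) : a ^+ 2 - b ^+ 2 = 1 -> C0 y ->
  C0 (mkv (c1 y) (a * c2 y + b * c3 y) (b * c2 y + a * c3 y)).
Proof.
rewrite /C0 /W0m /S0 /W0p /= !mkvE => ab [[[-> ->]|[-> y23]]|[-> ->]].
- by left; left; split => //; ring.
- left; right; split => //; rewrite ler_norm_sqr -subr_ge0.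
  have -> : (b * c2 y + a * c3 y) ^+ 2 - (a * c2 y + b * c3 y) ^+ 2
          = (a ^+ 2 - b ^+ 2) * (c3 y ^+ 2 - c2 y ^+ 2) by ring.
  by rewrite ab mul1r subr_ge0 -ler_norm_sqr.
- by right; split => //; ring.
Qed.

Lemma SO0_unitmx (g : 'M[R]_3) : SO0 g -> g \in unitmx.
Proof. by case=> _ [gdet _]; rewrite unitmxE gdet unitr1. Qed.

Lemma SO0_C0 (g g' : 'M[R]_3) (y : vec) : SO0 g -> SO0 g' ->
  g *m v0 R = g' *m v0 R -> C0 y -> C0 (invmx g *m (g' *m y)).
Proof.
move=> Sg Sg' gg' Cy; have gU := SO0_unitmx Sg.
have [|x z||a [b [ab kE]]] := @stabilizer_v0_boost (invmx g *m g').
- by rewrite -mulmxA -gg' mulKmx.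
- by rewrite -(proj1 Sg) !mulmxA !mulmxV // !mul1mx (proj1 Sg').
- by rewrite det_mulmx det_inv (proj1 (proj2 Sg)) (proj1 (proj2 Sg')) invr1 mulr1.
- by rewrite mulmxA kE; exact: boost_C0.
Qed.

Lemma crooked_planeE (g : 'M[R]_3) (u q z : vec) : SO0 g -> g *m v0 R = u ->
  crooked_plane u q z <-> C0 (invmx g *m (z - q)).
Proof.
move=> Sg gu; split.
- move=> [g' [y [Sg' g'u Cy ->]]].
  by rewrite addrC addKr; apply: SO0_C0 => //; rewrite gu g'u.
- move=> Cy; exists g, (invmx g *m (z - q)); split => //.
  by rewrite mulKVmx ?SO0_unitmx // addrC subrK.
Qed.

Lemma closed_le_continuous (T : topologicalType) (f g : T -> R) :
  continuous f -> continuous g -> closed [set x | f x <= g x].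
Proof.
move=> cf cg.
have -> : [set x | f x <= g x] = (fun x => g x - f x) @^-1` [set r | 0 <= r].
  by apply/seteqP; split => x /=; rewrite subr_ge0.
by apply: preimage_closed; [move=> x _; apply: cvgB; [exact: cg | exact: cf] | exact: closed_ge].
Qed.

Lemma closed_eq_continuous (T : topologicalType) (f g : T -> R) :
  continuous f -> continuous g -> closed [set x | f x = g x].
Proof.
move=> cf cg.
have -> : [set x | f x = g x] = (fun x => f x - g x) @^-1` [set r | r = 0].
  by apply/seteqP; split => x /= => [->|/eqP]; [exact: subrr | rewrite subr_eq0 => /eqP].
by apply: preimage_closed; [move=> x _; apply: cvgB; [exact: cf | exact: cg] | exact: closed_eq].
Qed.

Lemma closed_C0 : closed (C0 (R:=R)).
Proof.
have c1c : continuous (@c1 R) := @coord_continuous R 3 1 (inord 0) 0.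
have c2c : continuous (@c2 R) := @coord_continuous R 3 1 (inord 1) 0.
have c3c : continuous (@c3 R) := @coord_continuous R 3 1 (inord 2) 0.
have nc2 : continuous (fun x : vec => `|c2 x|) by move=> x; exact: cvg_norm (c2c x).
have nc3 : continuous (fun x : vec => `|c3 x|) by move=> x; exact: cvg_norm (c3c x).
have oc3 : continuous (fun x : vec => - c3 x) by move=> x; exact: cvgN (c3c x).
have cst0 : continuous (fun _ : vec => (0 : R)) by exact: cst_continuous.
apply: closedU; first apply: closedU.
- exact: closedI (closed_le_continuous c1c cst0) (closed_eq_continuous c2c c3c).
- exact: closedI (closed_eq_continuous c1c cst0) (closed_le_continuous nc2 nc3).
- exact: closedI (closed_le_continuous cst0 c1c) (closed_eq_continuous c2c oc3).
Qed.

Lemma ray_continuous (V : normedModType R) (x e : V) : continuous (fun t : R => x + t *: e).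
Proof. by move=> t; apply: cvgD; [exact: cvg_cst | apply: cvgZr_tmp; exact: cvg_id]. Qed.

Lemma closed_ray_avoid (V : normedModType R) (A : set V) (x e : V) : closed A -> ~ A x ->
  exists2 tau : R, 0 < tau & forall t, 0 <= t <= tau -> ~ A (x + t *: e).
Proof.
move=> cA Ax.
have : nbhs (0 : R) ((fun t => x + t *: e) @^-1` ~` A).
  apply: ray_continuous; apply: open_nbhs_nbhs; split; first exact: closed_openC.
  by rewrite scale0r addr0.
move=> /nbhs_ballP [eps eps0 Heps]; exists (eps / 2); first by rewrite divr_gt0.
move=> t /andP [t0 t1]; apply: Heps.
rewrite -ball_normE /ball_ /= sub0r normrN ger0_norm //.
by apply: le_lt_trans t1 _; rewrite ltr_pdivrMr // ltr_pMr // ltr1n.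
Qed.

Lemma crooked_plane_ray_avoid (u q x e : vec) : ~ crooked_plane u q x ->
  exists2 tau : R, 0 < tau & forall t, 0 <= t <= tau -> ~ crooked_plane u q (x + t *: e).
Proof.
move=> Cx.
have [[g [Sg gu]]|nog] := pselect (exists g, SO0 g /\ g *m v0 R = u); last first.
  by exists 1 => // t _ [g [y [Sg gu _ _]]]; apply: nog; exists g.
have [|tau tau0 Ht] := @closed_ray_avoid _ _ (invmx g *m (x - q)) (invmx g *m e) closed_C0.
  by move/(crooked_planeE _ _ Sg gu).
exists tau => // t /Ht Ct /(crooked_planeE _ _ Sg gu).
by rewrite addrAC mulmxDr -scalemxAr.
Qed.

Lemma connected_component_segment (V : normedModType R) (A : set V) (x0 x e : V) (tau : R) : 0 <= tau ->
  connected_component A x0 x -> (forall t, 0 <= t <= tau -> A (x + t *: e)) ->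
  connected_component A x0 (x + tau *: e).
Proof.
move=> tau0 x0x Aseg; apply: (connected_component_trans x0x).
pose S := (fun t : R => x + t *: e) @` `[0, tau].
have : S `<=` connected_component A x.
  apply: connected_component_max.
  - by exists 0; [rewrite /= in_itv /= lexx tau0 | rewrite scale0r addr0].
  - by move=> _ [t /= t0tau <-]; apply: Aseg; rewrite in_itv /= in t0tau.
  - apply: connected_continuous_connected; first exact: segment_connected.
    exact/continuous_subspaceT/ray_continuous.
by apply; exists tau; rewrite //= in_itv /= lexx tau0.
Qed.

Definition ray_open (A : set vec) :=
  forall x e, A x -> exists2 tau : R, 0 < tau & A (x + tau *: e).

Lemma crooked_halfspace_ray_open (u q : vec) : ray_open (crooked_halfspace u q).
Proof.
move=> x e [w [w1 w2 w3 qwx]].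
have [tau tau0 Htau] := crooked_plane_ray_avoid e (connected_component_sub qwx).
exists tau => //; exists w; split => //.
exact: connected_component_segment (ltW tau0) qwx Htau.
Qed.

Definition affine (f : vec -> vec) :=
  exists (M : 'M[R]_3) (c : vec), forall x, f x = M *m x + c.

Lemma affine_comp (f g : vec -> vec) : affine f -> affine g -> affine (f \o g).
Proof.
move=> [M [c fE]] [N [d gE]]; exists (M *m N), (M *m d + c) => x.
by rewrite /= fE gE mulmxDr mulmxA addrA.
Qed.

Lemma affine_shift (f : vec -> vec) (x y z : vec) : affine f ->
  f (x + (z - y)) = f x + (f z - f y).
Proof.
move=> [M [c fE]]; rewrite !fE mulmxDr mulmxBr.
by apply/matrixP => i j; rewrite !mxE; ring.
Qed.

Lemma affine_segment (f : vec -> vec) (x z : vec) (t : R) : affine f ->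
  f (x + t *: (z - x)) = f x + t *: (f z - f x).
Proof.
move=> [M [c fE]]; rewrite !fE mulmxDr -scalemxAr mulmxBr.
by apply/matrixP => i j; rewrite !mxE; ring.
Qed.

Lemma ray_open_image (f : vec -> vec) (A : set vec) :
  affine f -> (forall x, exists y, f y = x) -> ray_open A -> ray_open (f @` A).
Proof.
move=> fA fS Ao _ e [x Ax <-].
have [z fz] := fS (f x + e).
have [tau tau0 Axz] := Ao x (z - x) Ax.
exists tau => //; exists (x + tau *: (z - x)) => //.
by rewrite affine_segment // fz [f x + e]addrC addrK.
Qed.

Lemma closure_ray (A : set vec) (z e : vec) :
  (forall t : R, 0 < t <= 1 -> A (z + t *: e)) -> closure A z.
Proof.
move=> Aray B.
rewrite -[X in nbhs X](addr0 z) -(scale0r e) => /(@ray_continuous _ z e 0) /nbhs_ballP.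
move=> [eps eps0 Heps]; pose t := Num.min (eps / 2) 1.
have t0 : 0 < t by rewrite lt_min ltr01 andbT divr_gt0.
exists (z + t *: e); split; first by apply: Aray; rewrite t0 ge_min lexx orbT.
apply: Heps; rewrite -ball_normE /ball_ /= sub0r normrN gtr0_norm // gt_min.
by rewrite ltr_pdivrMr // ltr_pMr // ltr1n.
Qed.

Lemma convex_gt0 (a b s : R) : 0 < a -> 0 < b -> 0 <= s <= 1 -> 0 < a + s * (b - a).
Proof. by move=> a0 b0 /andP [s0 s1]; nra. Qed.

Lemma not_C0 (x : vec) :
  (0 < c1 x /\ 0 < c2 x + c3 x) \/ (c1 x < 0 /\ 0 < c2 x - c3 x) \/ (c2 x != 0 /\ c3 x = 0) ->
  ~ C0 x.
Proof.
rewrite /C0 /W0m /W0p /S0 /=.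
move=> [[h1 h2]|[[h1 h2]|[h1 h2]]] [[[H1 H2]|[H1 H2]]|[H1 H2]]; try lra.
all: try by move: h1; rewrite H2 h2 ?oppr0 eqxx.
by move: H2; rewrite h2 normr0 normr_le0; apply/negP.
Qed.

Definition segment_avoids_C0 (y z : vec) := forall s : R, 0 <= s <= 1 -> ~ C0 (y + s *: (z - y)).

Section Chart.
Variables (g : 'M[R]_3) (u q : vec).
Hypotheses (Sg : SO0 g) (gu : g *m v0 R = u).

Let F (y : vec) : vec := q + g *m y.

Let F_affine : affine F.
Proof. by exists g, q => y; rewrite /F addrC. Qed.

Lemma chart_crooked_plane (y : vec) : crooked_plane u q (F y) <-> C0 y.
Proof. by rewrite (crooked_planeE _ _ Sg gu) /F addrAC subrr add0r mulKmx ?SO0_unitmx. Qed.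

Lemma halfspace_segment_avoids_C0 (y z : vec) :
  crooked_halfspace u q (F y) -> segment_avoids_C0 y z -> crooked_halfspace u q (F z).
Proof.
move=> [w [w1 w2 w3 qwy]] yz; exists w; split => //.
have -> : F z = F y + 1 *: (F z - F y) by rewrite scale1r addrC subrK.
apply: connected_component_segment qwy _ => // t t01.
by rewrite -affine_segment //; move/chart_crooked_plane; exact: yz.
Qed.

Let T := 2 + `|ent g 2 0| / ent g 2 2.
Let w0 : vec := mkv 1 0 T.

Let T_ge2 : 2 <= T.
Proof. by rewrite lerDl divr_ge0 // ltW //; case: Sg => _ [_]. Qed.

(* [T] is chosen so large that [g w0] is future-pointing, whatever the first column of [g]. *)
Lemma halfspace_chart_base : crooked_halfspace u q (F w0).
Proof.
have g22 : 0 < ent g 2 2 by case: Sg => _ [_].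
have T2 := T_ge2.
exists (g *m w0); split.
- by rewrite (proj1 Sg) /Bform !mkvE; nra.
- rewrite c3_mul !mkvE.
  have -> : ent g 2 2 * T = 2 * ent g 2 2 + `|ent g 2 0|.
    by rewrite /T mulrDr mulrCA divff ?gt_eqF // mulr1 mulrC.
  have : - ent g 2 0 <= `|ent g 2 0| by rewrite -normrN ler_norm.
  lra.
- by rewrite -gu (proj1 Sg) /Bform /v0 !mkvE; lra.
- apply: connected_component_refl => /chart_crooked_plane; apply: not_C0; left.
  by rewrite !mkvE; lra.
Qed.

Lemma stem_chart_closure (y : vec) : S0 y -> closure (crooked_halfspace u q) (F y).
Proof.
have T2 := T_ge2.
have Fray e t : F y + t *: (g *m e) = F (y + t *: e) by rewrite /F mulmxDr scalemxAr addrA.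
move=> [y1 y23]; have [y3|y3] := lerP 0 (c3 y).
- have hy : 0 <= c2 y + c3 y.
    rewrite (ger0_norm y3) in y23; have := ler_norm (- c2 y); rewrite normrN; lra.
  apply: (@closure_ray _ _ (g *m mkv 1 0 1)) => t /andP [t0 t1]; rewrite Fray.
  apply: halfspace_segment_avoids_C0 halfspace_chart_base _ => r r01; apply: not_C0; left.
  rewrite !coordE !mkvE y1.
  have := convex_gt0 (@ltr01 R) t0 r01.
  have := @convex_gt0 T (c2 y + c3 y + t) r ltac:(lra) ltac:(lra) r01.
  lra.
- have hy : 0 <= c2 y - c3 y.
    rewrite (ltr0_norm y3) in y23; have := ler_norm (- c2 y); rewrite normrN; lra.
  (* go around the wing [W0m] through the points (-1,3,0) and (1,3,0) *)
  apply: (@closure_ray _ _ (g *m mkv (-1) 0 (-1))) => t /andP [t0 t1]; rewrite Fray.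
  apply: (@halfspace_segment_avoids_C0 (mkv (-1) 3 0)).
    apply: (@halfspace_segment_avoids_C0 (mkv 1 3 0)).
      apply: halfspace_segment_avoids_C0 halfspace_chart_base _ => r r01; apply: not_C0; left.
      rewrite !coordE !mkvE.
      have := @convex_gt0 T 3 r ltac:(lra) ltac:(lra) r01.
      lra.
    move=> r r01; apply: not_C0; right; right; rewrite !coordE !mkvE.
    by split; [apply/eqP; lra | ring].
  move=> r r01; apply: not_C0; right; left.
  rewrite !coordE !mkvE y1.
  have := convex_gt0 (@ltr01 R) t0 r01.
  have := @convex_gt0 3 (c2 y - c3 y + t) r ltac:(lra) ltac:(lra) r01.
  lra.
Qed.

End Chart.

Lemma stem_sub_closure (u q : vec) : stem u q `<=` closure (crooked_halfspace u q).
Proof. by move=> _ [g [y [Sg gu Sy ->]]]; exact: stem_chart_closure. Qed.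

Lemma affine_hpow (h : 'M[R]_3 * vec) (j : bool) : affine (hpow h j).
Proof.
case: j; first by exists h.1, h.2.
by exists (invmx h.1), (- (invmx h.1 *m h.2)) => x; rewrite /= /actinv mulmxBr.
Qed.

Lemma affine_gam m (h : 'I_m -> 'M[R]_3 * vec) (s : nat -> 'I_m * bool) k :
  affine (gam h s k).
Proof.
elim: k => [|k IH]; first by exists 1%:M, 0 => x; rewrite mul1mx addr0.
exact: affine_comp IH (affine_hpow _ _).
Qed.

Lemma hpow_surj (h : 'M[R]_3 * vec) (j : bool) : h.1 \in unitmx ->
  forall x, exists y, hpow h j y = x.
Proof.
move=> hU x; case: j.
- by exists (actinv h x); rewrite /= /act /actinv mulKVmx // subrK.
- by exists (act h x); rewrite /= /act /actinv addrK mulKmx.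
Qed.

Lemma gam_surj m (h : 'I_m -> 'M[R]_3 * vec) (s : nat -> 'I_m * bool) k :
  (forall i, SO0 (h i).1) -> forall x, exists y, gam h s k y = x.
Proof.
move=> hSO; elim: k => [|k IH] x; first by exists x.
have [y1 <-] := IH x.
have [y2 <-] := hpow_surj (s k).2 (SO0_unitmx (hSO (s k).1)) y1.
by exists y2.
Qed.

Lemma dot_gt0 (d : vec) : d != 0 -> 0 < dot d d.
Proof.
move=> d0; have sq_ge0 i : 0 <= d i 0 * d i 0 by rewrite -expr2 sqr_ge0.
rewrite lt_def sumr_ge0 ?andbT //; apply: contra d0 => /eqP dd0.
have dd := psumr_eq0P (fun i _ => sq_ge0 i) dd0.
apply/eqP/matrixP => i j; rewrite (ord1 j) mxE.
by apply/eqP; rewrite -sqrf_eq0 expr2 dd.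
Qed.

Lemma plane_comb (p a b x y z : vec) (c : R) :
  plane p a b x -> plane p a b y -> plane p a b z -> plane p a b (x + c *: (y - z)).
Proof.
move=> [s1 [t1 ->]] [s2 [t2 ->]] [s3 [t3 ->]].
exists (s1 + c * (s2 - s3)), (t1 + c * (t2 - t3)).
by apply/matrixP => i j; rewrite !mxE; ring.
Qed.

Lemma perp_line_not_ray_open (A : set vec) (p a b n0 d v x : vec) (sigma : R) :
  ray_open A -> plane p a b n0 -> plane p a b (n0 + d) -> d != 0 -> sigma != 0 ->
  A `&` plane p a b `<=` [set y | plane p a b y /\ 0 <= sigma * dot (y - v) d] ->
  plane p a b x -> dot (x - v) d = 0 -> ~ A x.
Proof.
move=> Ao Pn0 Pn1 d0 sig0 Ahalf Px xv Ax.
have [tau tau0 Ay] := Ao x (- sigma *: d) Ax.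
have Py : plane p a b (x + tau *: (- sigma *: d)).
  by have := plane_comb (tau * - sigma) Px Pn1 Pn0; rewrite addrAC subrr add0r scalerA.
have [_] := Ahalf _ (conj Ay Py).
have -> : dot (x + tau *: (- sigma *: d) - v) d = dot (x - v) d - tau * sigma * dot d d.
  by rewrite /dot !sum3 !mxE; ring.
rewrite xv sub0r.
have sig2 : 0 < sigma * sigma by rewrite -expr2 lt_def sqr_ge0 sqrf_eq0 sig0.
have := mulr_gt0 (mulr_gt0 tau0 sig2) (dot_gt0 d0).
lra.
Qed.

Lemma perp_line_shift (p a b v v' d x z : vec) :
  plane p a b v' -> plane p a b x -> dot (x - v) d = 0 ->
  plane p a b z -> dot (z - v') d = 0 ->
  plane p a b (x + (v' - z)) /\ dot (x + (v' - z) - v) d = 0.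
Proof.
move=> Pv' Px xv Pz zv'; split; first by have := plane_comb 1 Px Pv' Pz; rewrite scale1r.
have -> : dot (x + (v' - z) - v) d = dot (x - v) d - dot (z - v') d.
  by rewrite /dot !sum3 !mxE; ring.
by rewrite xv zv' subrr.
Qed.

Lemma rho_eq_sub (x y x' y' : vec) : x - y = x' - y' -> rho x y = rho x' y'.
Proof.
move=> E; rewrite /rho; congr Num.sqrt; apply: eq_bigr => i _.
by have := congr1 (fun M : vec => M i 0) E; rewrite !mxE => ->.
Qed.

Lemma segment_endpoint (v w : vec) : segment v w v.
Proof. by exists 0; rewrite lexx ler01 subr0 scale1r scale0r addr0. Qed.

End CrookedHalfspaces.

Theorem mainTheorem12 (R : realType) (m : nat)
  (h : 'I_m -> 'M[R]_3 * 'cV[R]_3) (hSO : forall i, SO0 (h i).1)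
  (u q : 'I_m -> bool -> 'cV[R]_3)
  (hu : forall i j, Bform (u i j) (u i j) = 1)
  (hdisj : forall i j i' j', (i, j) != (i', j') ->
     crooked_halfspace (u i j) (q i j) `&` crooked_halfspace (u i' j') (q i' j') = set0)
  (hpair : forall i, act (h i) @` crooked_halfspace (u i false) (q i false)
                     = ~` closure (crooked_halfspace (u i true) (q i true)))
  (delta0 : R) (hdelta0 : 0 < delta0)
  (hdelta0P : forall i j i' j', (i, j) != (i', ~~ j') ->
     nbhd (~` crooked_halfspace (u i j) (q i j)) delta0 `<=`
     ~` (hpow (h i) j @` closure (crooked_halfspace (u i' j') (q i' j'))))
  (p : 'cV[R]_3)
  (hp : ~ (exists2 g, in_Gamma h g &
            (g @` closure (~` \bigcup_(ij in [set: 'I_m * bool])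
                 closure (crooked_halfspace (u ij.1 ij.2) (q ij.1 ij.2)))) p))
  (s : nat -> 'I_m * bool)
  (hs : forall k, s k != ((s k.+1).1, ~~ (s k.+1).2))
  (hnest : forall k,
     gam h s k.+1 @` crooked_halfspace (u (s k.+1).1 (s k.+1).2) (q (s k.+1).1 (s k.+1).2)
     `<` gam h s k @` crooked_halfspace (u (s k).1 (s k).2) (q (s k).1 (s k).2))
  (hpin : forall k,
     (gam h s k @` crooked_halfspace (u (s k).1 (s k).2) (q (s k).1 (s k).2)) p)
  (hangle : (angle (u (s O).1 (s O).2) < (pi / 2)%:E)%E)
  (a b : 'cV[R]_3) (hdef : definite_dir a b)
  (hvert : forall g, in_Gamma h g -> forall i j, ~ plane p a b (g (q i j)))
  (nu : set 'cV[R]_3) (n0 d : 'cV[R]_3) (hd : d != 0)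
  (hnu : nu = line n0 d) (hnuP : nu `<=` plane p a b)
  (hnudir : exists v w, [/\ w != v,
      plane p a b `&` (gam h s 0 @` stem (u (s O).1 (s O).2) (q (s O).1 (s O).2))
        = segment v w & exists c : R, d = c *: (w - v)])
  (L : nat -> set 'cV[R]_3)
  (hL : forall k, exists v (sigma : R), [/\
      exists2 w, w != v &
        plane p a b `&` (gam h s k @` stem (u (s k).1 (s k).2) (q (s k).1 (s k).2))
          = segment v w,
      sigma = 1 \/ sigma = -1,
      L k = [set x | plane p a b x /\ dot (x - v) d = 0] &
      (gam h s k @` crooked_halfspace (u (s k).1 (s k).2) (q (s k).1 (s k).2))
        `&` plane p a b `<=` [set x | plane p a b x /\ 0 <= sigma * dot (x - v) d]]) :
  forall delta : R, delta <= delta0 -> forall k : nat,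
    (gam h s k @` nbhd (gam h s k @^-1` L k) delta) `&` L k.+1 = set0.
Proof.
move=> delta le_delta k.
pose H j := crooked_halfspace (u (s j).1 (s j).2) (q (s j).1 (s j).2).
have gamA := affine_gam h s k.
have Pn0 : plane p a b n0 by apply: hnuP; rewrite hnu; exists 0; rewrite scale0r addr0.
have Pn1 : plane p a b (n0 + d) by apply: hnuP; rewrite hnu; exists 1; rewrite scale1r.
have Lk_out y : L k (gam h s k y) -> ~ H k y.
  have [v [sig [_ sig1 -> half]]] := hL k; move=> [Py yv] Hy.
  have Ho : ray_open (gam h s k @` H k).
    exact: ray_open_image gamA (gam_surj s k hSO) (@crooked_halfspace_ray_open R _ _).
  apply: (perp_line_not_ray_open Ho Pn0 Pn1 hd _ half Py yv); last by exists y.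
  by case: sig1 => ->; rewrite ?oppr_eq0 oner_eq0.
have [v' [_ [[w' _ stem_seg] _ ELk1 _]]] := hL k.+1.
apply/seteqP; split => // x [[z [y Ly yz] <-] Lzk1]; exfalso.
have := segment_endpoint v' w'; rewrite -stem_seg => -[Pv' [y0 Sy0 y0v']].
pose w := hpow (h (s k).1) (s k).2 y0.
have Ly3 : L k (gam h s k (y + (w - z))).
  have [v [_ [_ _ ELk _]]] := hL k.
  rewrite ELk /= in Ly *; rewrite ELk1 in Lzk1.
  rewrite affine_shift // [gam h s k w]y0v'.
  by case: Ly => Py yv; case: Lzk1 => Pz zv'; exact: perp_line_shift.
have Nw : nbhd (~` H k) delta0 w.
  exists (y + (w - z)); first exact: Lk_out.
  rewrite (@rho_eq_sub _ _ _ z y); first exact: lt_le_trans yz le_delta.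
  by rewrite opprD addrA addrC opprB addrA subrK.
have sk : ((s k).1, (s k).2) != ((s k.+1).1, ~~ (s k.+1).2) by rewrite -surjective_pairing.
apply: (hdelta0P _ _ _ _ sk w Nw).
by exists y0 => //; exact: stem_sub_closure.
Qed.
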